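(* Let $(A,+,\circ)$ be a left brace which has a transitive cycle base, let $g$ be an element of a transitive cycle base of $A$, and let $(A,\bullet)$ be the cycle set given by $a\bullet b:=\lambda_a(g)^{-}\circ b$ for all $a,b\in A$. Let $H:=\{h\in A\mid \lambda_h(g)=g\}$. Then $H$ is a subgroup of $(A,\circ)$, the retraction $\mathrm{Ret}(A,\bullet)$ coincides with the set $A/H$ of left cosets $a\circ H$ (i.e. $\sigma_a=\sigma_b$ in $(A,\bullet)$ if and only if $a^{-}\circ b\in H$), and $\mathrm{Soc}(A)\subseteq H$.
   Context: A left brace is a set $A$ with two operations such that $(A,+)$ is an abelian group, $(A,\circ)$ is a group, and $a\circ(b+c)=a\circ b-a+a\circ c$ for all $a,b,c$. For $a\in A$, $\lambda_a(b):=-a+a\circ b$; each $\lambda_a$ is an automorphism of $(A,+)$ and $a\mapsto\lambda_a$ is a homomorphism $(A,\circ)\to\mathrm{Aut}(A,+)$. $a^{-}$ denotes the inverse of $a$ in $(A,\circ)$. $\mathrm{Soc}(A):=\{a\in A\mid \lambda_a=\mathrm{id}_A\}$. A transitive cycle base is a subset of $A$ which is a single orbit of the action $\lambda$ of $(A,\circ)$ on $A$ and which generates $(A,+)$. A cycle set is a set $X$ with a binary operation such that each left multiplication $\sigma_x:y\mapsto x\cdot y$ is bijective and $(x\cdot y)\cdot(x\cdot z)=(y\cdot x)\cdot(y\cdot z)$; the retraction $\mathrm{Ret}(X)$ is the quotient of $X$ by the equivalence $x\sim y\iff\sigma_x=\sigma_y$. *)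

From mathcomp Require Import all_boot all_algebra.
Set Implicit Arguments. Unset Strict Implicit. Unset Printing Implicit Defensive.
Import GRing.Theory.
Local Open Scope ring_scope.

Section Brace.
Variable A : zmodType.
Variables (circ : A -> A -> A) (e : A) (inv : A -> A).

Definition is_left_brace : Prop :=
  [/\ (forall a b c, circ a (circ b c) = circ (circ a b) c),
      (forall a, circ e a = a /\ circ a e = a),
      (forall a, circ (inv a) a = e /\ circ a (inv a) = e) &
      (forall a b c, circ a (b + c) = circ a b - a + circ a c)].

Definition lam (a b : A) : A := - a + circ a b.

Definition add_subgroup (S : A -> Prop) : Prop :=
  S 0 /\ (forall x y, S x -> S y -> S (x - y)).

Definition generates_add (X : A -> Prop) : Prop :=
  forall S, add_subgroup S -> (forall x, X x -> S x) -> forall a, S a.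

Definition lambda_orbit (X : A -> Prop) : Prop :=
  exists x0, forall y, X y <-> exists a, lam a x0 = y.

Definition transitive_cycle_base (X : A -> Prop) : Prop :=
  lambda_orbit X /\ generates_add X.

Definition circ_subgroup (H : A -> Prop) : Prop :=
  [/\ H e, (forall x y, H x -> H y -> H (circ x y)) &
      (forall x, H x -> H (inv x))].

Definition socle (a : A) : Prop := forall b, lam a b = b.

Definition bullet (g a b : A) : A := circ (inv (lam a g)) b.

End Brace.

(* Every lambda_h is an additive automorphism and h |-> lambda_h is a group
   homomorphism, so H is the stabilizer of g under the lambda-action and
   hence a subgroup; socle elements act trivially, so they stabilize g.
   Since inverses in (A, o) are unique, sigma_a = sigma_b in (A, .) iff
   lambda_a(g) = lambda_b(g), iff a^- o b stabilizes g, i.e. lies in H. *)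
From mathcomp Require Import all_boot all_algebra.
Set Implicit Arguments. Unset Strict Implicit. Unset Printing Implicit Defensive.
Import GRing.Theory.
Local Open Scope ring_scope.

Section LeftBrace.
Variables (A : zmodType) (circ : A -> A -> A) (e : A) (inv : A -> A).
Hypothesis brace : is_left_brace circ e inv.

Let circA a b c : circ a (circ b c) = circ (circ a b) c.
Proof. by case: brace. Qed.
Let circ1x a : circ e a = a.
Proof. by case: brace => _ /(_ a) []. Qed.
Let circx1 a : circ a e = a.
Proof. by case: brace => _ /(_ a) []. Qed.
Let circVx a : circ (inv a) a = e.
Proof. by case: brace => _ _ /(_ a) []. Qed.
Let circxV a : circ a (inv a) = e.
Proof. by case: brace => _ _ /(_ a) []. Qed.
Let circ_addr a b c : circ a (b + c) = circ a b - a + circ a c.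
Proof. by case: brace. Qed.

Lemma circx0 a : circ a 0 = a.
Proof.
have := circ_addr a 0 0; rewrite addr0 => /(congr1 (fun t => t - circ a 0)).
by rewrite addrK subrr => /esym/subr0_eq.
Qed.

Lemma circ_unit_eq0 : e = 0.
Proof. by rewrite -(circx0 e) circ1x. Qed.

Lemma circ_inv_inj : injective inv.
Proof. by move=> x y eq_inv; rewrite -(circx1 x) -(circVx y) -eq_inv circA circxV circ1x. Qed.

Lemma lamD a b c : lam circ a (b + c) = lam circ a b + lam circ a c.
Proof. by rewrite /lam circ_addr !addrA. Qed.

Lemma lam0 a : lam circ a 0 = 0.
Proof. by rewrite /lam circx0 addNr. Qed.

Lemma lamN a x : lam circ a (- x) = - lam circ a x.
Proof. by apply/esym/addr0_eq; rewrite -lamD subrr lam0. Qed.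

Lemma lam1 c : lam circ e c = c.
Proof. by rewrite /lam circ1x circ_unit_eq0 oppr0 add0r. Qed.

Lemma lamM a b c : lam circ (circ a b) c = lam circ a (lam circ b c).
Proof.
rewrite [lam circ b c]/lam lamD lamN /lam circA opprD opprK.
by rewrite addrA (addrAC a) subrr add0r.
Qed.

Lemma lamVK a c : lam circ (inv a) (lam circ a c) = c.
Proof. by rewrite -lamM circVx lam1. Qed.

Lemma lam_stabilizer_subgroup x :
  circ_subgroup circ e inv (fun h => lam circ h x = x).
Proof.
split=> [|h k hx kx|h hx]; first exact: lam1.
- by rewrite lamM kx hx.
- by rewrite -{1}hx lamVK.
Qed.

Lemma lam_eq_stabilizer a b x :
  lam circ a x = lam circ b x <-> lam circ (circ (inv a) b) x = x.
Proof.
rewrite lamM; split=> [<-|eq_x]; first exact: lamVK.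
by rewrite -{1}eq_x -lamM circxV lam1.
Qed.

Lemma bullet_eq g a b :
  bullet circ inv g a = bullet circ inv g b <-> lam circ a g = lam circ b g.
Proof.
rewrite /bullet; split=> [/(congr1 (fun f => f e)) /= | ->]; last by [].
by rewrite !circx1 => /circ_inv_inj.
Qed.

End LeftBrace.

Theorem mainTheorem1 (A : zmodType) (circ : A -> A -> A) (e : A) (inv : A -> A) :
  is_left_brace circ e inv ->
  forall (X : A -> Prop) (g : A),
    transitive_cycle_base circ X -> X g ->
    let H := fun h : A => lam circ h g = g in
    [/\ circ_subgroup circ e inv H,
        (forall a b : A,
            bullet circ inv g a = bullet circ inv g b <-> H (circ (inv a) b)) &
        (forall a : A, socle circ a -> H a)].
Proof.
move=> brace X g _ _ H; split.
- exact: lam_stabilizer_subgroup brace g.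
- move=> a b; apply: iff_trans (bullet_eq brace g a b) _.
  exact: lam_eq_stabilizer brace _ _ _.
- by move=> a soc_a; apply: soc_a.
Qed.
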